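(* Let $U$ be a Banach space with norm $\|\cdot\|$, $V$ a Hilbert space, $\psi:U\times V\to V$, and $(\bar u,\bar v)$ in the interior of the domain of $\psi$ with $\psi(\bar u,\bar v)=0$. Assume (a) there are neighborhoods ${\cal B}_U$ of $\bar u$ and ${\cal B}_V$ of $\bar v$ such that $\psi$ is continuous on ${\cal B}_U\times{\cal B}_V$; (b) $\psi(u,\cdot)$ is strongly monotone on ${\cal B}_V$ uniformly in $u\in{\cal B}_U$, i.e. there is $\tau>0$ with $\langle\psi(u,v_1)-\psi(u,v_2),v_1-v_2\rangle\ge\tau\|v_1-v_2\|^2$ for all $v_1,v_2\in{\cal B}_V$, $u\in{\cal B}_U$; (c) $\psi(\cdot,v)$ is Lipschitz continuous on $U$ uniformly in $v\in{\cal B}_V$. Then, with $S(u):=\{v\in V:\psi(u,v)=0\}$ for $u\in U$: (i) $S$ has a single-valued localization around $\bar u$ for $\bar v$; (ii) this localization is Lipschitz continuous around $\bar u$.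
   Context: A set-valued map $S:U\rightrightarrows V$ has a single-valued localization around $\bar u$ for $\bar v\in S(\bar u)$ if there are neighborhoods $W$ of $\bar u$ and $O$ of $\bar v$ such that $u\mapsto S(u)\cap O$ is single-valued on $W$ (in particular $W\subset\operatorname{dom}S$); it is Lipschitz continuous around $\bar u$ if this single-valued map is Lipschitz on $W$. *)

From HB Require Import structures.
From mathcomp Require Import all_boot all_order all_algebra.
From mathcomp Require Import all_classical all_reals all_analysis.
Set Implicit Arguments. Unset Strict Implicit. Unset Printing Implicit Defensive.
Import Order.TTheory GRing.Theory Num.Theory.
Import numFieldNormedType.Exports.
Local Open Scope classical_set_scope.
Local Open Scope ring_scope.

(* A real Hilbert space: a complete normed space V whose norm comes from
   the (real, symmetric, bilinear) inner product [ip]. *)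
Definition is_inner_product (R : realType) (V : completeNormedModType R)
  (ip : V -> V -> R) : Prop :=
  (forall x y, ip x y = ip y x) /\
  (forall a x y z, ip (a *: x + y) z = a * ip x z + ip y z) /\
  (forall x, ip x x = `|x| ^+ 2).

Definition sv_localization_on (R : realType) (U V : normedModType R)
  (S : U -> set V) (ubar : U) (vbar : V) (W : set U) (O : set V) : Prop :=
  nbhs ubar W /\ nbhs vbar O /\
  forall u, W u -> exists! v, S u v /\ O v.

Definition has_sv_localization (R : realType) (U V : normedModType R)
  (S : U -> set V) (ubar : U) (vbar : V) : Prop :=
  S ubar vbar /\ exists W O, sv_localization_on S ubar vbar W O.

Definition has_lipschitz_sv_localization (R : realType) (U V : normedModType R)
  (S : U -> set V) (ubar : U) (vbar : V) : Prop :=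
  S ubar vbar /\ exists W O, sv_localization_on S ubar vbar W O /\
  exists L : R, forall u1 u2 v1 v2, W u1 -> W u2 ->
    S u1 v1 -> O v1 -> S u2 v2 -> O v2 -> `|v1 - v2| <= L * `|u1 - u2|.

From HB Require Import structures.
From mathcomp Require Import all_boot all_order all_algebra.
From mathcomp Require Import all_classical all_reals all_analysis.
From mathcomp Require Import ring lra.
Import Order.TTheory GRing.Theory Num.Theory.
Import numFieldNormedType.Exports.
Set Implicit Arguments. Unset Strict Implicit. Unset Printing Implicit Defensive.
Local Open Scope classical_set_scope.
Local Open Scope ring_scope.

(* For u near ubar, F := psi (u, .) is continuous and tau-strongly monotone on a ball K
   around vbar; a zero of F is produced without any compactness argument. For a finitely
   supported probability measure mu on K, let Phi mu be the maximum over v of the mu-average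
   of the Minty gap <F w, w - v> - tau/2 |w - v|^2. Strong monotonicity makes Phi
   nonnegative, and along mixtures Phi is affine up to the term
   - tau/2 t (1 - t) |z mu - z nu|^2, where z mu is the maximizing v. Hence the points z of
   a minimizing sequence form a Cauchy sequence, and mixing with Dirac masses shows that its
   limit p satisfies Minty's inequality <F w, w - p> >= tau/2 |w - p|^2 on K. Taking
   w = vbar puts p near vbar, and w = p - s F p with s -> 0+ gives F p = 0. Uniqueness and
   the Lipschitz constant L / tau follow from strong monotonicity and the Lipschitz
   continuity of psi in u. *)

Lemma ler_of_forall_shrink (R : realFieldType) (B P : R) :
  (forall t, 0 < t <= 1 -> (1 - t) * B <= P) -> B <= P.
Proof.
move=> hB; have P_ge0 : 0 <= P by have := hB 1; rewrite lexx ltr01 subrr mul0r; apply.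
have [B_le0|B_gt0] := lerP B 0; first exact: le_trans B_le0 P_ge0.
apply/ler_addgt0Pr => e e_gt0.
pose t := Num.min 1 (e / B).
have t_gt0 : 0 < t by rewrite lt_min ltr01 divr_gt0.
have tB_le : t * B <= e by rewrite -ler_pdivlMr // ge_min lexx orbT.
have := hB t; rewrite t_gt0 ge_min lexx /= => /(_ isT); lra.
Qed.

Lemma exists_small_factor (R : realFieldType) (a b0 c : R) :
  0 <= a -> 0 < b0 -> 0 < c -> exists b, [/\ 0 < b, b <= b0 & a * b < c].
Proof.
move=> a_ge0 b0_gt0 c_gt0; have ca_gt0 : 0 < c / (a + 1) by rewrite divr_gt0 //; lra.
exists (Num.min b0 (c / (a + 1))); split; first by rewrite lt_min b0_gt0.
  by rewrite ge_min lexx.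
apply: (le_lt_trans (y := a * (c / (a + 1)))); first by rewrite ler_wpM2l // ge_min lexx orbT.
by rewrite mulrA ltr_pdivrMr; lra.
Qed.

Lemma continuous_slice (X Y Z : topologicalType) (f : X * Y -> Z)
    (A : set X) (B : set Y) x y :
  {within A `*` B, continuous f} -> nbhs x A -> nbhs y B ->
  {for y, continuous (fun v => f (x, v))}.
Proof.
move=> fc Ax By; have AB_xy : (A `*` B)° (x, y) by exists (A, B).
have := fc (x, y); rewrite /continuous_at -(nbhs_subspace_interior AB_xy) => fxy.
by apply: (cvg_comp (fun v => (x, v)) f) fxy; apply: cvg_pair; [exact: cvg_cst|].
Qed.

Lemma nbhs_ball_mem (K : numDomainType) (M : pseudoMetricNormedZmodType K) (x y : M) e :
  ball x e y -> nbhs y (ball x e).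
Proof. by move=> xy; apply: open_nbhs_nbhs; split; first exact: ball_open. Qed.

Section InnerProduct.
Variables (R : realType) (V : completeNormedModType R) (ip : V -> V -> R).
Hypothesis ipP : is_inner_product ip.

Lemma ipC x y : ip x y = ip y x.
Proof. by case: ipP. Qed.

Lemma ipxx x : ip x x = `|x| ^+ 2.
Proof. by case: ipP => _ []. Qed.

Lemma ipDl x y z : ip (x + y) z = ip x z + ip y z.
Proof. by case: ipP => _ [+ _] => /(_ 1 x y z); rewrite scale1r mul1r. Qed.

Lemma ip0l z : ip 0 z = 0.
Proof. have := ipDl 0 0 z; rewrite addr0; lra. Qed.

Lemma ipZl a x z : ip (a *: x) z = a * ip x z.
Proof. by case: ipP => _ [+ _] => /(_ a x 0 z); rewrite addr0 ip0l addr0. Qed.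

Lemma ipNl x z : ip (- x) z = - ip x z.
Proof. by rewrite -scaleN1r ipZl mulN1r. Qed.

Lemma ipDr x y z : ip z (x + y) = ip z x + ip z y.
Proof. by rewrite ipC ipDl !(ipC z). Qed.

Lemma ip0r z : ip z 0 = 0.
Proof. by rewrite ipC ip0l. Qed.

Lemma ipZr a x z : ip z (a *: x) = a * ip z x.
Proof. by rewrite ipC ipZl ipC. Qed.

Lemma ipNr x z : ip z (- x) = - ip z x.
Proof. by rewrite ipC ipNl ipC. Qed.

Definition ipE := (ipDl, ipDr, ipNl, ipNr, ipZl, ipZr, ip0l, ip0r).

Lemma ip_le_normM x y : ip x y <= `|x| * `|y|.
Proof.
have [->|x_neq0] := eqVneq x 0; first by rewrite ip0l normr0 mul0r.
have [->|y_neq0] := eqVneq y 0; first by rewrite ip0r normr0 mulr0.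
have := ipxx (`|y| *: x - `|x| *: y); rewrite !ipE !ipxx (ipC y x) => sqr_norm_expand.
have xy_gt0 : 0 < `|x| * `|y| by rewrite mulr_gt0 // normr_gt0.
rewrite -(ler_pM2l xy_gt0); nra.
Qed.

Lemma le_norm_of_ip c a x : c * `|x| ^+ 2 <= ip a x -> c * `|x| <= `|a|.
Proof.
move=> h; have [->|x_neq0] := eqVneq x 0; first by rewrite normr0 mulr0.
have x_gt0 : 0 < `|x| by rewrite normr_gt0.
rewrite -(ler_pM2r x_gt0) -mulrA -expr2.
exact: le_trans h (ip_le_normM a x).
Qed.

(* Minty's trick: test the hypothesis at w = p - s F p for a small s > 0. *)
Lemma minty_zero (F : V -> V) p : {for p, continuous F} ->
  (\forall w \near p, 0 <= ip (F w) (w - p)) -> F p = 0.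
Proof.
move=> Fc F_minty; have [//|Fp_neq0] := eqVneq (F p) 0; exfalso.
set a := F p in Fp_neq0 Fc; have a_gt0 : 0 < `|a| by rewrite normr_gt0.
have close : \forall w \near p, `|a - F w| < `|a| / 2.
  by apply: cvgr_dist_lt; rewrite ?divr_gt0.
have : \forall w \near p, 0 <= ip (F w) (w - p) /\ `|a - F w| < `|a| / 2.
  exact/near_andP.
case/nbhs_ballP => d /= d_gt0 near_p.
pose s := d / (2 * `|a|); have s_gt0 : 0 < s by rewrite divr_gt0 ?mulr_gt0.
pose w := p - s *: a.
have [w_minty w_close] : 0 <= ip (F w) (w - p) /\ `|a - F w| < `|a| / 2.
  apply: near_p; rewrite -ball_normE /= /w opprB addrC subrK normrZ gtr0_norm //.
  have -> : s * `|a| = d / 2 by rewrite /s; field; rewrite gt_eqF.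
  lra.
have Fw_a_le0 : ip (F w) a <= 0.
  by move: w_minty; rewrite /w addrAC subrr add0r ipNr ipZr oppr_ge0 pmulr_rle0.
have Fw_a_ge : `|a| ^+ 2 - `|a - F w| * `|a| <= ip (F w) a.
  have := ip_le_normM (a - F w) a; rewrite ipDl ipNl ipxx; lra.
have : `|a - F w| * `|a| <= `|a| / 2 * `|a| by rewrite ler_pM2r // ltW.
nra.
Qed.

(* Finitely supported measures on V are lists of (weight, point) pairs. *)
Definition mass (s : seq (R * V)) := \sum_(q <- s) q.1.
Definition wsum (a : V -> V) (s : seq (R * V)) := \sum_(q <- s) q.1 *: a q.2.
Definition wmom (a : V -> V) (s : seq (R * V)) := \sum_(q <- s) q.1 * ip (a q.2) q.2.
(* Half the double sum of l_i l_j <a w_i - a w_j, w_i - w_j> over the pairs of atoms. *)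
Definition dispersion (a : V -> V) (s : seq (R * V)) :=
  mass s * wmom a s - ip (wsum a s) (wsum id s).

Lemma sum_ip_shift a s w :
  \sum_(q <- s) q.1 * ip (a q.2 - a w) (q.2 - w) =
  wmom a s - ip (wsum a s) w - ip (a w) (wsum id s) + mass s * ip (a w) w.
Proof.
rewrite /wmom /wsum /mass; elim: s => [|q s IH]; first by rewrite !big_nil !ipE; ring.
by rewrite !big_cons IH !ipE; ring.
Qed.

Lemma dispersion_cons a l w s : dispersion a ((l, w) :: s) =
  dispersion a s + l * \sum_(q <- s) q.1 * ip (a q.2 - a w) (q.2 - w).
Proof. by rewrite sum_ip_shift /dispersion /wmom /wsum /mass !big_cons /= !ipE; ring. Qed.

Lemma dispersion_ge (K : set V) (a : V -> V) c s :
  (forall x y, K x -> K y -> c * `|x - y| ^+ 2 <= ip (a x - a y) (x - y)) ->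
  {in s, forall q, 0 <= q.1 /\ K q.2} -> c * dispersion id s <= dispersion a s.
Proof.
move=> a_mono; elim: s => [|[l w] s IH] s_in.
  by rewrite /dispersion /mass /wmom /wsum !big_nil !ipE !mul0r subr0 mulr0.
have [l_ge0 Kw] := s_in (l, w) (mem_head _ _).
have {}s_in : {in s, forall q, 0 <= q.1 /\ K q.2}.
  by move=> q qs; apply: s_in; rewrite in_cons qs orbT.
rewrite !dispersion_cons mulrDr lerD ?IH // mulrCA ler_wpM2l // mulr_sumr.
rewrite big_seq [leRHS]big_seq; apply: ler_sum => q qs.
have [q_ge0 Kq] := s_in q qs.
by rewrite /= ipxx mulrCA ler_wpM2l // a_mono.
Qed.

Definition prob_on (K : set V) (s : seq (R * V)) :=
  mass s = 1 /\ {in s, forall q, 0 <= q.1 /\ K q.2}.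

Definition dirac (w : V) : seq (R * V) := [:: (1, w)].

Definition mix (t : R) (s1 s2 : seq (R * V)) :=
  [seq ((1 - t) * q.1, q.2) | q <- s1] ++ [seq (t * q.1, q.2) | q <- s2].

Lemma prob_on_dirac K w : K w -> prob_on K (dirac w).
Proof.
move=> Kw; split; first by rewrite /mass big_seq1.
by move=> q; rewrite inE => /eqP ->.
Qed.

Lemma prob_on_mix K t s1 s2 : 0 <= t <= 1 ->
  prob_on K s1 -> prob_on K s2 -> prob_on K (mix t s1 s2).
Proof.
move=> /andP[t_ge0 t_le1] [mass1 s1_in] [mass2 s2_in]; split.
  by rewrite /mass big_cat !big_map -!mulr_sumr -/(mass s1) -/(mass s2) mass1 mass2 /= !mulr1 subrK.
move=> q; rewrite mem_cat => /orP[] /mapP[q' q'_in ->] /=.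
  by have [? ?] := s1_in q' q'_in; rewrite mulr_ge0 ?subr_ge0.
by have [? ?] := s2_in q' q'_in; rewrite mulr_ge0.
Qed.

Lemma big_mix_mulr (g : V -> R) t s1 s2 :
  \sum_(q <- mix t s1 s2) q.1 * g q.2 =
  (1 - t) * \sum_(q <- s1) q.1 * g q.2 + t * \sum_(q <- s2) q.1 * g q.2.
Proof. by rewrite big_cat !big_map !mulr_sumr; congr (_ + _); apply: eq_bigr => q _; rewrite mulrA. Qed.

Lemma big_mix_scaler (g : V -> V) t s1 s2 :
  \sum_(q <- mix t s1 s2) q.1 *: g q.2 =
  (1 - t) *: \sum_(q <- s1) q.1 *: g q.2 + t *: \sum_(q <- s2) q.1 *: g q.2.
Proof. by rewrite big_cat !big_map !scaler_sumr; congr (_ + _); apply: eq_bigr => q _; rewrite scalerA. Qed.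

Lemma wsum_mix a t s1 s2 : wsum a (mix t s1 s2) = (1 - t) *: wsum a s1 + t *: wsum a s2.
Proof. exact: big_mix_scaler. Qed.

Lemma wmom_mix a t s1 s2 : wmom a (mix t s1 s2) = (1 - t) * wmom a s1 + t * wmom a s2.
Proof. exact: (big_mix_mulr (fun x => ip (a x) x)). Qed.

Section Phi.
Variables (F : V -> V) (tau : R).
Hypothesis tau_gt0 : 0 < tau.

Definition center s := wsum id s - tau^-1 *: wsum F s.

(* Closed form of max_v sum_i l_i (<F w_i, w_i - v> - tau/2 |w_i - v|^2) for mass 1,
   the maximum being attained at v = center s. *)
Definition Phi s := wmom F s - tau / 2 * wmom id s + tau / 2 * `|center s| ^+ 2.

Lemma Phi_dispersion s : mass s = 1 ->
  Phi s = dispersion F s - tau / 2 * dispersion id s + (2 * tau)^-1 * `|wsum F s| ^+ 2.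
Proof.
move=> mass1; rewrite /Phi /dispersion /center mass1 -!ipxx !ipE (ipC (wsum id s)).
by field; rewrite gt_eqF.
Qed.

Lemma Phi_ge0 K s :
  (forall x y, K x -> K y -> tau * `|x - y| ^+ 2 <= ip (F x - F y) (x - y)) ->
  prob_on K s -> 0 <= Phi s.
Proof.
move=> F_mono [mass1 s_in]; rewrite Phi_dispersion //.
have F_disp := dispersion_ge F_mono s_in.
have id_disp : 0 <= dispersion id s.
  rewrite -(mul0r (dispersion id s)); apply: (dispersion_ge (K := K)) => // x y _ _.
  by rewrite mul0r ipxx sqr_ge0.
have : 0 <= tau * dispersion id s by rewrite mulr_ge0 // ltW.
have : 0 <= (2 * tau)^-1 * `|wsum F s| ^+ 2.
  by rewrite mulr_ge0 ?sqr_ge0 // invr_ge0 mulr_ge0 // ltW.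
have -> : tau / 2 * dispersion id s = tau * dispersion id s / 2 by ring.
lra.
Qed.

Lemma center_mix t s1 s2 : center (mix t s1 s2) = (1 - t) *: center s1 + t *: center s2.
Proof.
rewrite /center !wsum_mix scalerDr !scalerBr !scalerA.
by rewrite (mulrC tau^-1 (1 - t)) (mulrC tau^-1 t) opprD addrACA.
Qed.

Lemma Phi_mix t s1 s2 : Phi (mix t s1 s2) =
  (1 - t) * Phi s1 + t * Phi s2 - tau / 2 * (t * (1 - t)) * `|center s1 - center s2| ^+ 2.
Proof.
rewrite /Phi center_mix !wmom_mix -!ipxx.
by move: (center s1) (center s2) => z1 z2; rewrite !ipE (ipC z2 z1); ring.
Qed.

Lemma Phi_dirac w v : Phi (dirac w) - tau / 2 * `|v - center (dirac w)| ^+ 2 =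
  ip (F w) (w - v) - tau / 2 * `|w - v| ^+ 2.
Proof.
rewrite /Phi /center /wmom /wsum !big_seq1 /= !scale1r !mul1r -!ipxx !ipE.
by rewrite (ipC w (F w)) (ipC v w) (ipC v (F w)); field; rewrite gt_eqF.
Qed.

End Phi.

Section Minty.
Variables (F : V -> V) (tau : R) (K : set V) (w0 : V).
Hypotheses (tau_gt0 : 0 < tau) (Kw0 : K w0).
Hypothesis F_mono : forall x y, K x -> K y ->
  tau * `|x - y| ^+ 2 <= ip (F x - F y) (x - y).

Let Phi_K := Phi F tau @` prob_on K.

Let Phi_K_has_inf : has_inf Phi_K.
Proof.
split; first by exists (Phi F tau (dirac w0)), (dirac w0) => //; exact: prob_on_dirac.
by exists 0 => _ [s s_prob <-]; exact: Phi_ge0 F_mono s_prob.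
Qed.

Lemma inf_Phi_ge0 : 0 <= inf Phi_K.
Proof.
apply: lb_le_inf; first exact: Phi_K_has_inf.1.
by move=> _ [s s_prob <-]; exact: Phi_ge0 F_mono s_prob.
Qed.

Lemma inf_Phi_le s : prob_on K s -> inf Phi_K <= Phi F tau s.
Proof. by move=> s_prob; apply: (ge_inf Phi_K_has_inf.2); exists s. Qed.

Lemma exists_minimizing_seq : exists sq : nat -> seq (R * V),
  forall n, prob_on K (sq n) /\ Phi F tau (sq n) < inf Phi_K + harmonic n.
Proof.
suff /choice[sq sq_min] :
    forall n, exists s, prob_on K s /\ Phi F tau s < inf Phi_K + harmonic n.
  by exists sq.
move=> n; have [_ [s s_prob <-] ?] := inf_adherent (harmonic_gt0 n) Phi_K_has_inf.
by exists s.
Qed.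

Section MinimizingSequence.
Variable sq : nat -> seq (R * V).
Hypothesis sq_min : forall n, prob_on K (sq n) /\ Phi F tau (sq n) < inf Phi_K + harmonic n.

Let z n := center F tau (sq n).

Lemma minimizing_centers_close n k :
  tau / 8 * `|z n - z k| ^+ 2 < (harmonic n + harmonic k) / 2.
Proof.
have [n_prob n_min] := sq_min n; have [k_prob k_min] := sq_min k.
have half01 : 0 <= (2^-1 : R) <= 1 by apply/andP; split; lra.
have := inf_Phi_le (prob_on_mix half01 n_prob k_prob).
rewrite Phi_mix /z; lra.
Qed.

Lemma minimizing_centers_cvg : cvg (z @ \oo).
Proof.
apply: cauchy_cvg; apply: cauchy_exP => e e_gt0.
have c_gt0 : 0 < tau * e ^+ 2 / 8 by rewrite !mulr_gt0 // exprn_gt0.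
have /cvgr_lt/(_ _ c_gt0)[N _ small] := @cvg_harmonic R.
exists (z N), N => // n /= le_Nn; rewrite -ball_normE /=.
have close := minimizing_centers_close N n.
have [hN hn] := (small N (leqnn N), small n le_Nn).
rewrite -(ltr_pXn2r (_ : 0 < 2)%N) ?nnegrE ?normr_ge0 ?(ltW e_gt0) //.
rewrite -(ltr_pM2l tau_gt0); lra.
Qed.

Lemma minimizing_limit_bound w t : K w -> 0 < t <= 1 ->
  (1 - t) * (tau / 2 * `|lim (z @ \oo) - center F tau (dirac w)| ^+ 2) <= Phi F tau (dirac w).
Proof.
move=> Kw /andP[t_gt0 t_le1].
set p := lim _; set zw := center F tau (dirac w).
pose gap n := t * ((1 - t) * (tau / 2 * `|z n - zw| ^+ 2)) - harmonic n.
have gap_le n : gap n <= t * Phi F tau (dirac w).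
  have [n_prob n_min] := sq_min n.
  have t01 : 0 <= t <= 1 by rewrite ltW.
  have := inf_Phi_le (prob_on_mix t01 n_prob (prob_on_dirac Kw)).
  rewrite Phi_mix -/(z n) -/zw /gap.
  have : (1 - t) * Phi F tau (sq n) <= (1 - t) * (inf Phi_K + harmonic n).
    by rewrite ler_wpM2l ?subr_ge0 // ltW.
  have : 0 <= t * inf Phi_K by rewrite mulr_ge0 ?inf_Phi_ge0 ?ltW.
  have : 0 <= t * harmonic n by rewrite mulr_ge0 ?harmonic_ge0 ?ltW.
  lra.
have gap_cvg : gap @ \oo --> t * ((1 - t) * (tau / 2 * `|p - zw| ^+ 2)) - 0.
  have dist_cvg : `|z n - zw| @[n --> \oo] --> `|p - zw|.
    by apply: cvg_norm; apply: cvgB minimizing_centers_cvg (cvg_cst _).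
  apply: cvgB; last exact: cvg_harmonic.
  by do 3 (apply: cvgM; first exact: cvg_cst); exact: (cvgM dist_cvg dist_cvg).
have near_le : \forall n \near \oo, gap n <= t * Phi F tau (dirac w) by exact: nearW.
have := closed_cvg _ (@closed_le R _) near_le _ gap_cvg.
by rewrite subr0 /= ler_pM2l //; apply; exact: eventually_filter.
Qed.

End MinimizingSequence.

Lemma exists_minty_point :
  exists p, forall w, K w -> tau / 2 * `|w - p| ^+ 2 <= ip (F w) (w - p).
Proof.
have [sq sq_min] := exists_minimizing_seq.
exists (lim (center F tau (sq n) @[n --> \oo])) => w Kw.
have := ler_of_forall_shrink (fun t => minimizing_limit_bound sq_min Kw (t := t)).
by rewrite -subr_ge0 Phi_dirac // subr_ge0.
Qed.

End Minty.
End InnerProduct.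

Section Localization.
Variables (R : realType) (U V : completeNormedModType R) (ip : V -> V -> R).
Variables (psi : U * V -> V) (BU : set U) (BV : set V) (tau L : R).
Hypotheses (ipP : is_inner_product ip) (tau_gt0 : 0 < tau).
Hypothesis psi_mono : forall u v1 v2, BU u -> BV v1 -> BV v2 ->
  tau * `|v1 - v2| ^+ 2 <= ip (psi (u, v1) - psi (u, v2)) (v1 - v2).
Hypothesis psi_lip : forall v u1 u2, BV v ->
  `|psi (u1, v) - psi (u2, v)| <= L * `|u1 - u2|.

Lemma zeros_dist_le u1 u2 v1 v2 : BU u1 -> BV v1 -> BV v2 ->
  psi (u1, v1) = 0 -> psi (u2, v2) = 0 -> tau * `|v1 - v2| <= L * `|u1 - u2|.
Proof.
move=> BUu1 BVv1 BVv2 zero1 zero2.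
have := psi_mono BUu1 BVv1 BVv2.
have -> : psi (u1, v1) - psi (u1, v2) = psi (u2, v2) - psi (u1, v2) by rewrite zero1 zero2.
by move=> /(le_norm_of_ip ipP)/le_trans; apply; rewrite distrC psi_lip.
Qed.

Variables (ubar : U) (vbar : V) (rho r : R).
Hypotheses (rho_gt0 : 0 < rho) (r_gt0 : 0 < r) (L_ge0 : 0 <= L).
Hypotheses (BU_ball : ball ubar rho `<=` BU) (BV_ball : ball vbar r `<=` BV).
Hypothesis rho_small : 4 * L * rho < tau * r.
Hypothesis psi_zero : psi (ubar, vbar) = 0.
Hypothesis psi_cont : {within BU `*` BV, continuous psi}.

Let half_ball_sub : ball vbar (r / 2) `<=` ball vbar r.
Proof. by apply: le_ball; rewrite ler_pdivrMr // ler_pMr // ler1n. Qed.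

Lemma exists_zero_near u :
  ball ubar rho u -> exists2 p, ball vbar (r / 2) p & psi (u, p) = 0.
Proof.
move=> u_near; have BUu := BU_ball u_near.
have vbar_r : ball vbar r vbar by exact: ballxx.
have [p p_minty] := exists_minty_point ipP tau_gt0 vbar_r
  (fun x y Kx Ky => psi_mono BUu (BV_ball Kx) (BV_ball Ky)).
have p_near : ball vbar (r / 2) p.
  (* tau/2 |vbar - p| <= |psi (u, vbar) - psi (ubar, vbar)| <= L rho < tau r / 4 *)
  have := le_norm_of_ip ipP (p_minty vbar vbar_r).
  rewrite -[psi (u, vbar)]subr0 -psi_zero => /le_trans/(_ (psi_lip _ _ (BV_ball vbar_r))).
  move: u_near; rewrite -!ball_normE /= => u_near.
  have : L * `|u - ubar| <= L * rho by rewrite ler_wpM2l // distrC ltW.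
  move=> dist_le_rho dist_le.
  suff : tau * `|vbar - p| < tau * (r / 2) by rewrite ltr_pM2l.
  have := rho_small; lra.
have p_in : nbhs p (ball vbar r) by apply: nbhs_ball_mem; exact: half_ball_sub.
exists p => //; apply: (minty_zero ipP (F := fun v => psi (u, v))).
  apply: (continuous_slice psi_cont); last exact: filterS BV_ball p_in.
  exact: filterS BU_ball (nbhs_ball_mem u_near).
apply: filterS p_in => w /p_minty; apply: le_trans.
by rewrite mulr_ge0 ?sqr_ge0 // divr_ge0 // ltW.
Qed.

Lemma zeros_near_lipschitz u1 u2 v1 v2 : ball ubar rho u1 -> ball vbar (r / 2) v1 ->
  ball vbar (r / 2) v2 -> psi (u1, v1) = 0 -> psi (u2, v2) = 0 ->
  `|v1 - v2| <= L / tau * `|u1 - u2|.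
Proof.
move=> u1_near v1_near v2_near v1_zero v2_zero; rewrite mulrAC ler_pdivlMr // mulrC.
exact: zeros_dist_le (BU_ball u1_near) (BV_ball (half_ball_sub v1_near))
  (BV_ball (half_ball_sub v2_near)) v1_zero v2_zero.
Qed.

Lemma zeros_localization : sv_localization_on (fun u => [set v | psi (u, v) = 0])
  ubar vbar (ball ubar rho) (ball vbar (r / 2)).
Proof.
split; first exact: nbhsx_ballx.
split; first by apply: nbhsx_ballx; rewrite divr_gt0.
move=> u u_near; have [p p_near p_zero] := exists_zero_near u_near.
exists p; split => // v [v_zero v_near].
have := zeros_near_lipschitz u_near p_near v_near p_zero v_zero.
by rewrite subrr normr0 mulr0 normr_le0 subr_eq0 => /eqP.
Qed.

End Localization.

Theorem theorem8 (R : realType) (U V : completeNormedModType R)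
  (ip : V -> V -> R) (hV : is_inner_product ip)
  (psi : U * V -> V) (ubar : U) (vbar : V)
  (hzero : psi (ubar, vbar) = 0)
  (BU : set U) (BV : set V) (hBU : nbhs ubar BU) (hBV : nbhs vbar BV)
  (hcont : {within BU `*` BV, continuous psi})
  (hmono : exists tau : R, 0 < tau /\
     forall u v1 v2, BU u -> BV v1 -> BV v2 ->
       ip (psi (u, v1) - psi (u, v2)) (v1 - v2) >= tau * `|v1 - v2| ^+ 2)
  (hlip : exists L : R, forall v u1 u2, BV v ->
       `|psi (u1, v) - psi (u2, v)| <= L * `|u1 - u2|) :
  let S := fun u : U => [set v : V | psi (u, v) = 0] in
  has_sv_localization S ubar vbar /\ has_lipschitz_sv_localization S ubar vbar.
Proof.
move=> S; have [tau [tau_gt0 psi_mono]] := hmono; have [L0 psi_lip0] := hlip.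
pose L := `|L0|; have L_ge0 : 0 <= L := normr_ge0 L0.
have psi_lip v u1 u2 : BV v -> `|psi (u1, v) - psi (u2, v)| <= L * `|u1 - u2|.
  by move=> BVv; apply: le_trans (psi_lip0 v u1 u2 BVv) _; rewrite ler_wpM2r // ler_norm.
have /nbhs_ballP[rho0 /= rho0_gt0 BU_ball0] := hBU.
have /nbhs_ballP[r /= r_gt0 BV_ball] := hBV.
have [rho [rho_gt0 rho_le rho_small]] :=
  exists_small_factor (mulr_ge0 (ler0n _ 4) L_ge0) rho0_gt0 (mulr_gt0 tau_gt0 r_gt0).
have BU_ball : ball ubar rho `<=` BU := subset_trans (le_ball rho_le) BU_ball0.
have loc := zeros_localization hV tau_gt0 psi_mono psi_lip rho_gt0 r_gt0 L_ge0 BU_ball BV_ball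
  rho_small hzero hcont.
split; split => //; first by exists (ball ubar rho), (ball vbar (r / 2)).
exists (ball ubar rho), (ball vbar (r / 2)); split => //.
exists (L / tau) => u1 u2 v1 v2 u1_near _ v1_zero v1_near v2_zero v2_near.
exact: (zeros_near_lipschitz hV tau_gt0 psi_mono psi_lip r_gt0 BU_ball BV_ball
  u1_near v1_near v2_near v1_zero v2_zero).
Qed.
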